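(* Let $L$ be a consistent pretransitive logic and $k\le\omega$. Then the $k$-canonical frame of $L$ is $1$-heavy: for every point $x$ of depth greater than $1$ there is $y$ with $xR^*y$ and the depth of $y$ equal to $1$.
   Context: Logics are normal $n$-modal logics; a $k$-formula uses only $p_j$, $j<k$. $L$ is pretransitive if $L\vdash\Diamond^{m+1}p\to\Diamond^{\le m}p$ for some $m$, where $\Diamond^0\varphi=\varphi$, $\Diamond^{i+1}\varphi=\Diamond^i(\bigvee_{j<n}\Diamond_j\varphi)$, $\Diamond^{\le m}\varphi=\bigvee_{i\le m}\Diamond^i\varphi$. The $k$-canonical frame has points the maximal $L$-consistent sets of $k$-formulas, $xR_iy$ iff $\Diamond_i\psi\in x$ for all $k$-formulas $\psi\in y$. $R=\bigcup_iR_i$ and $R^*$ is its reflexive transitive closure. Clusters are classes of $R^*\cap(R^* )^{-1}$; the skeleton is the poset of clusters with $C\le D$ iff $xR^*y$ for some $x\in C,y\in D$; the height of a frame is the maximal size of a chain in its skeleton; the depth of $x$ is the height of the restriction of the frame to $R^*(x)$. For $0<h<\omega$, a frame is $h$-heavy if for every point $x$ of depth $>h$ there is $y$ with $xR^*y$ and depth of $y$ exactly $h$. *)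

From mathcomp Require Import all_boot.
From Stdlib Require Import Relations.
From Stdlib Require List.
Set Implicit Arguments. Unset Strict Implicit. Unset Printing Implicit Defensive.

Inductive form (n : nat) : Type :=
| Var : nat -> form n
| Bot : form n
| Imp : form n -> form n -> form n
| Box : 'I_n -> form n -> form n.
Arguments Bot {n}.

Definition Neg n (a : form n) : form n := Imp a Bot.
Definition Top n : form n := Neg (@Bot n).
Definition Or n (a b : form n) : form n := Imp (Neg a) b.
Definition And n (a b : form n) : form n := Neg (Imp a (Neg b)).
Definition Dia n (i : 'I_n) (a : form n) : form n := Neg (Box i (Neg a)).

Fixpoint bigOr n (l : seq (form n)) : form n :=
  match l with [::] => Bot | a :: l => Or a (bigOr l) end.
Fixpoint bigAnd n (l : seq (form n)) : form n :=
  match l with [::] => Top n | a :: l => And a (bigAnd l) end.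

Fixpoint DiaPow n (i : nat) (a : form n) : form n :=
  match i with
  | 0 => a
  | i.+1 => DiaPow i (bigOr [seq Dia j a | j <- enum 'I_n])
  end.
Definition DiaLe n (m : nat) (a : form n) : form n :=
  bigOr [seq DiaPow i a | i <- iota 0 m.+1].

Fixpoint subst n (s : nat -> form n) (a : form n) : form n :=
  match a with
  | Var j => s j
  | Bot => Bot
  | Imp a b => Imp (subst s a) (subst s b)
  | Box i a => Box i (subst s a)
  end.

(** classical tautologies: valid under every boolean valuation treating
    variables and boxed formulas as atoms *)
Fixpoint peval n (v : form n -> bool) (a : form n) : bool :=
  match a with
  | Var _ => v a
  | Bot => false
  | Imp a b => implb (peval v a) (peval v b)
  | Box _ _ => v a
  end.
Definition tautology n (a : form n) : Prop := forall v, peval v a = true.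

Definition normal_logic n (L : form n -> Prop) : Prop :=
  [/\ (forall a, tautology a -> L a),
      (forall i a b, L (Imp (Box i (Imp a b)) (Imp (Box i a) (Box i b)))),
      (forall a b, L (Imp a b) -> L a -> L b),
      (forall i a, L a -> L (Box i a)) &
      (forall s a, L a -> L (subst s a))].

Definition consistent_logic n (L : form n -> Prop) : Prop := ~ L Bot.

Definition pretransitive n (L : form n -> Prop) : Prop :=
  exists m : nat, L (Imp (DiaPow m.+1 (@Var n 0)) (DiaLe m (@Var n 0))).

(** k-formulas, k <= omega encoded as option nat (None = omega) *)
Fixpoint vars_below n (k : nat) (a : form n) : bool :=
  match a with
  | Var j => j < k
  | Bot => true
  | Imp a b => vars_below k a && vars_below k b
  | Box _ a => vars_below k a
  end.
Definition kformula n (k : option nat) (a : form n) : Prop :=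
  match k with Some k => vars_below k a | None => True end.

Definition Lconsistent n (L : form n -> Prop) (G : form n -> Prop) : Prop :=
  forall l : seq (form n), (forall a, List.In a l -> G a) -> ~ L (Neg (bigAnd l)).

Definition maximal_consistent n (L : form n -> Prop) (k : option nat)
    (G : form n -> Prop) : Prop :=
  [/\ (forall a, G a -> kformula k a),
      Lconsistent L G &
      (forall D : form n -> Prop, (forall a, D a -> kformula k a) ->
          Lconsistent L D -> (forall a, G a -> D a) -> forall a, D a -> G a)].

Record cpoint n (L : form n -> Prop) (k : option nat) := CPoint {
  cset : form n -> Prop;
  cset_mc : maximal_consistent L k cset }.

Definition canR n (L : form n -> Prop) (k : option nat) (i : 'I_n)
    (x y : cpoint L k) : Prop :=
  forall a, kformula k a -> cset y a -> cset x (Dia i a).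

Definition canRU n (L : form n -> Prop) (k : option nat) (x y : cpoint L k) : Prop :=
  exists i : 'I_n, canR i x y.

(** depth in a frame (W, R): R* is the reflexive transitive closure.
    [depth_ge R x m] : the skeleton of the subframe R*(x) has a chain of
    m clusters, given by representatives f 0 < f 1 < ... < f (m-1)
    (strictly increasing in the cluster order). *)
Definition depth_ge (W : Type) (R : W -> W -> Prop) (x : W) (m : nat) : Prop :=
  exists f : nat -> W,
    (forall i, i < m -> clos_refl_trans W R x (f i)) /\
    (forall i, i.+1 < m ->
        clos_refl_trans W R (f i) (f i.+1) /\ ~ clos_refl_trans W R (f i.+1) (f i)).

Definition depth_gt (W : Type) (R : W -> W -> Prop) (x : W) (h : nat) : Prop :=
  depth_ge R x h.+1.
Definition depth_eq (W : Type) (R : W -> W -> Prop) (x : W) (h : nat) : Prop :=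
  depth_ge R x h /\ ~ depth_ge R x h.+1.

Definition heavy (W : Type) (R : W -> W -> Prop) (h : nat) : Prop :=
  forall x, depth_gt R x h -> exists y, clos_refl_trans W R x y /\ depth_eq R y h.

(* Fix a pretransitivity bound m.  In the k-canonical frame, z is R*-reachable
   from y iff every formula of z occurs in y under Dia^{<=m}: one direction is
   the axiom Dia^{m+1} p -> Dia^{<=m} p, the other picks one j <= m serving all
   formulas of z at once (z is closed under conjunction) and builds an R-path
   of length j by Lindenbaum's lemma.  Consequently y reaches z iff z contains
   the theory of the cone R*(y); along an R*-chain these theories increase, so
   their union is consistent and extends to an upper bound of the chain.
   Zorn's lemma then gives, above every x, a point y seen back by all its
   successors, i.e. a point of depth 1. *)

From mathcomp Require Import all_boot boolp.
From mathcomp Require classical_sets.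
From mathcomp Require Import zify.
From Stdlib Require Import Relations Classical.
From Stdlib Require List.

Set Implicit Arguments. Unset Strict Implicit. Unset Printing Implicit Defensive.

Lemma In_mem (T : eqType) (x : T) (s : seq T) : List.In x s <-> x \in s.
Proof.
elim: s => [|y s IH] //=; rewrite in_cons.
by split=> [[->|/IH->]|/orP[/eqP->|/IH]]; rewrite ?eqxx ?orbT; auto.
Qed.

Lemma In_map (T U : Type) (f : T -> U) (s : seq T) u :
  List.In u (map f s) <-> exists2 t, List.In t s & u = f t.
Proof.
elim: s u => [|t s IH] u /=; first by split=> // -[].
split=> [[<-|/IH [t' st' ->]]|[t' /= [<-|st'] ->]]; last by right; apply/IH; exists t'.
- by exists t => //; left.
- by exists t' => //; right.
- by left.
Qed.

Lemma ZL_preorder_Prop (T : Type) (t0 : T) (R : T -> T -> Prop) :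
  (forall t, R t t) -> (forall r s t, R r s -> R s t -> R r t) ->
  (forall A, classical_sets.total_on A R -> exists t, forall s, A s -> R s t) ->
  exists t, forall s, R t s -> R s t.
Proof.
move=> Rrefl Rtrans Rchain.
have [|r s t /asboolP rs /asboolP st|A Atot|t tmax] :=
  classical_sets.ZL_preorder t0 (R := fun s t => `[< R s t >]).
- by move=> t; apply/asboolP.
- by apply/asboolP; exact: Rtrans rs st.
- have [|t At] := Rchain A; last by exists t => s /At /asboolP.
  by move=> s t As At; case: (Atot s t As At) => /asboolP; auto.
- by exists t => s /asboolP /tmax /asboolP.
Qed.

Lemma In_chain_union (T X : Type) (B : X -> Prop) (G : T -> X -> Prop)
    (A : T -> Prop) (r : T -> T -> Prop) :
  classical_sets.total_on A r -> (forall s t, r s t -> forall x, G s x -> G t x) ->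
  (forall t, A t -> forall x, B x -> G t x) ->
  forall l, (forall x, List.In x l -> B x \/ exists2 t, A t & G t x) ->
  (forall x, List.In x l -> B x) \/ exists2 t, A t & forall x, List.In x l -> G t x.
Proof.
move=> Atot Gmono BG; elim=> [|x l IH] xlU; first by left.
have {IH} [lB|[t At lG]] := IH (fun y yl => xlU y (or_intror yl));
  case: (xlU x (or_introl erefl)) => [xB|[t' At' xG]].
- by left=> y [<-|/lB].
- by right; exists t' => // y [<-//|/lB]; exact: BG.
- by right; exists t => // y [<-|/lG//]; exact: BG.
- case: (Atot t t' At At') => [/Gmono tt'|/Gmono t't].
  + by right; exists t' => // y [<-//|/lG]; exact: tt'.
  + by right; exists t => // y [<-|/lG//]; exact: t't.
Qed.

Lemma depth_eq_1_of_premaximal (W : Type) (R : W -> W -> Prop) (y : W) :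
  (forall z, clos_refl_trans W R y z -> clos_refl_trans W R z y) -> depth_eq R y 1.
Proof.
move=> ymax; split.
  by exists (fun _ => y); split=> [i _|[]//]; exact: rt_refl.
move=> [f [f_reach f_chain]]; have [_ nf10] := f_chain 0 erefl.
by apply: nf10; exact: rt_trans (ymax _ (f_reach 1 erefl)) (f_reach 0 erefl).
Qed.

(* Decides a propositional tautology once [simpl] has exposed its atoms
   [peval v _] and [v (Box _ _)]. *)
Ltac peval_cases :=
  repeat match goal with
  | |- context [peval ?v ?a] => case: (peval v a)
  | |- context [?v (@Box ?n ?i ?a)] => case: (v (Box i a))
  end.

Section NormalLogic.
Variables (n : nat) (L : form n -> Prop).
Implicit Types (a b c e q : form n) (l : seq (form n)).

Definition diaU a : form n := bigOr [seq Dia i a | i <- enum 'I_n].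

Lemma DiaPow_add i j a : DiaPow (i + j) a = DiaPow i (DiaPow j a).
Proof. by elim: j a => [|j IH] a; rewrite ?addn0 // addnS /= IH. Qed.

Lemma subst_bigOr s l : subst s (bigOr l) = bigOr [seq subst s e | e <- l].
Proof. by elim: l => //= a l ->. Qed.

Lemma subst_DiaPow s j a : subst s (DiaPow j a) = DiaPow j (subst s a).
Proof. by elim: j a => //= j IH a; rewrite IH subst_bigOr -map_comp. Qed.

Lemma subst_DiaLe s m a : subst s (DiaLe m a) = DiaLe m (subst s a).
Proof.
by rewrite /DiaLe subst_bigOr -map_comp; congr bigOr; apply: eq_map => j /=; rewrite subst_DiaPow.
Qed.

Lemma peval_And v a b : peval v (And a b) = peval v a && peval v b.
Proof. by rewrite /=; case: (peval v a); case: (peval v b). Qed.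

Lemma peval_bigAnd v l : peval v (bigAnd l) <-> forall e, List.In e l -> peval v e.
Proof.
elim: l => [|a l IH]; first by split.
rewrite peval_And; split=> [/andP [va /IH vl] e [<-//|/vl//]|al].
by apply/andP; split; [apply: al; left | apply/IH => e el; apply: al; right].
Qed.

Lemma peval_bigAnd_cat v l l' :
  peval v (bigAnd (l ++ l')) = peval v (bigAnd l) && peval v (bigAnd l').
Proof. by elim: l => [|a l IH] //=; rewrite IH; peval_cases. Qed.

Lemma Lconsistent_chain_union (T : Type) (B : form n -> Prop) (G : T -> form n -> Prop)
    (A : T -> Prop) (r : T -> T -> Prop) :
  classical_sets.total_on A r -> (forall s t, r s t -> forall a, G s a -> G t a) ->
  (forall t, A t -> forall a, B a -> G t a) ->
  Lconsistent L B -> (forall t, A t -> Lconsistent L (G t)) ->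
  Lconsistent L (fun a => B a \/ exists2 t, A t & G t a).
Proof.
move=> Atot Gmono BG Bcons Gcons l lU.
have [lB|[t At lG]] := In_chain_union Atot Gmono BG lU; [exact: Bcons | exact: Gcons t At l lG].
Qed.

Hypothesis HL : normal_logic L.

Lemma L_taut a : tautology a -> L a. Proof. by case: HL => + _ _ _ _; apply. Qed.
Lemma L_K i a b : L (Imp (Box i (Imp a b)) (Imp (Box i a) (Box i b))).
Proof. by case: HL => _ + _ _ _; apply. Qed.
Lemma L_mp a b : L (Imp a b) -> L a -> L b. Proof. by case: HL => _ _ + _ _; apply. Qed.
Lemma L_nec i a : L a -> L (Box i a). Proof. by case: HL => _ _ _ + _; apply. Qed.
Lemma L_subst s a : L a -> L (subst s a). Proof. by case: HL => _ _ _ _ +; apply. Qed.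

Lemma L_tconseq a c : L a -> (forall v, peval v a -> peval v c) -> L c.
Proof. by move=> La ac; apply: (L_mp _ La); apply: L_taut => v /=; apply/implyP/ac. Qed.

Lemma L_tconseq2 a b c : L a -> L b ->
  (forall v, peval v a -> peval v b -> peval v c) -> L c.
Proof.
move=> La Lb abc; apply: (L_mp _ Lb); apply: (L_tconseq La) => v /= va.
by apply/implyP/abc.
Qed.

Lemma L_box_bigAnd_imp i l c :
  L (Imp (bigAnd l) c) -> L (Imp (bigAnd [seq Box i e | e <- l]) (Box i c)).
Proof.
elim: l c => [|e l IH] c /= lc.
  have Lc : L c by apply: L_tconseq lc _ => v /=; peval_cases.
  by apply: L_tconseq (L_nec i Lc) _ => v /=; peval_cases.
have Lec : L (Imp (bigAnd l) (Imp e c)) by apply: (L_tconseq lc) => v /=; peval_cases.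
by apply: (L_tconseq2 (IH _ Lec) (L_K i e c)) => v /=; peval_cases.
Qed.

Lemma not_Lconsistent_add (G : form n -> Prop) a :
  ~ Lconsistent L (fun e => G e \/ e = a) ->
  exists2 l, (forall e, List.In e l -> G e) & L (Imp (bigAnd l) (Neg a)).
Proof.
move=> Ga_incons.
have [l Gal Ll] : exists2 l, (forall e, List.In e l -> G e \/ e = a) & L (Neg (bigAnd l)).
  by apply: NNPP => H; apply: Ga_incons => l Gal Ll; apply: H; exists l.
exists (List.filter (fun e => ~~ `[< e = a >]) l).
  by move=> e /List.filter_In [/Gal [//|->]]; rewrite asboolT.
apply: (L_tconseq Ll) => v /= nl; apply/implyP => /peval_bigAnd la; apply/implyP => va.
move: nl; have -> // : peval v (bigAnd l).
apply/peval_bigAnd => e el; case: (asboolP (e = a)) => [->//|nea].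
by apply: la; apply/List.filter_In; rewrite asboolF.
Qed.

Section CanonicalFrame.
Variable k : option nat.
Local Notation kf := (kformula k).
Local Notation pt := (cpoint L k).

Lemma kf_Bot : kf (@Bot n). Proof. by case: k. Qed.
Lemma kf_Imp a b : kf (Imp a b) <-> kf a /\ kf b.
Proof. by case: k => //= j; split=> [/andP|[-> ->]]. Qed.
Lemma kf_Box i a : kf (Box i a) <-> kf a. Proof. by case: k. Qed.
Lemma kf_Neg a : kf (Neg a) <-> kf a.
Proof. by rewrite kf_Imp; split=> [[]//|]; split; last exact: kf_Bot. Qed.
Lemma kf_Dia i a : kf (Dia i a) <-> kf a. Proof. by rewrite kf_Neg kf_Box kf_Neg. Qed.
Lemma kf_Or a b : kf (Or a b) <-> kf a /\ kf b. Proof. by rewrite kf_Imp kf_Neg. Qed.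
Lemma kf_And a b : kf (And a b) <-> kf a /\ kf b. Proof. by rewrite kf_Neg kf_Imp kf_Neg. Qed.

Lemma kf_bigOr l : (forall e, List.In e l -> kf e) -> kf (bigOr l).
Proof.
elim: l => [|a l IH] kl /=; first exact: kf_Bot.
by apply/kf_Or; split; [apply: kl; left | apply: IH => e el; apply: kl; right].
Qed.

Lemma kf_diaU a : kf a -> kf (diaU a).
Proof. by move=> ka; apply: kf_bigOr => _ /In_map [i _ ->]; apply/kf_Dia. Qed.

Lemma kf_DiaPow j a : kf a -> kf (DiaPow j a).
Proof. by elim: j a => [|j IH] a ka //=; apply/IH/kf_diaU. Qed.

Lemma kf_DiaLe m a : kf a -> kf (DiaLe m a).
Proof. by move=> ka; apply: kf_bigOr => _ /In_map [j _ ->]; apply: kf_DiaPow. Qed.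

Lemma cset_kf (y : pt) a : cset y a -> kf a.
Proof. by case: (cset_mc y) => + _ _; apply. Qed.

Lemma cset_consistent (y : pt) : Lconsistent L (cset y).
Proof. by case: (cset_mc y). Qed.

Lemma Lconsistent_of_cset (G : form n -> Prop) (y : pt) :
  (forall a, G a -> cset y a) -> Lconsistent L G.
Proof. by move=> Gy l lG; apply: (@cset_consistent y l) => e /lG /Gy. Qed.

Lemma cset_add (y : pt) q : kf q -> Lconsistent L (fun e => cset y e \/ e = q) -> cset y q.
Proof.
case: (cset_mc y) => yk _ ymax kq ycons.
by apply: (ymax _ _ ycons); [move=> e [/yk|->] | left | right].
Qed.

Lemma cset_bigAnd_imp (y : pt) l q :
  (forall e, List.In e l -> cset y e) -> kf q -> L (Imp (bigAnd l) q) -> cset y q.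
Proof.
move=> ly kq lq; apply: NNPP => nyq.
have [l' l'y l'nq] := not_Lconsistent_add (fun ycons => nyq (cset_add kq ycons)).
apply: (@cset_consistent y (l ++ l')) => [e /(@List.in_app_or _ l l' e) [/ly|/l'y]//|].
by apply: (L_tconseq2 lq l'nq) => v /=; rewrite peval_bigAnd_cat; peval_cases.
Qed.

Lemma cset_Neg_of_not (y : pt) a : kf a -> ~ cset y a -> cset y (Neg a).
Proof.
move=> ka nya; have [l ly lna] := not_Lconsistent_add (fun ycons => nya (cset_add ka ycons)).
exact: cset_bigAnd_imp ly (proj2 (kf_Neg a) ka) lna.
Qed.

Lemma cset_Bot (y : pt) : ~ cset y Bot.
Proof. by move=> yB; apply: (@cset_consistent y [:: Bot]) => [_ [<-|[]]//|]; apply: L_taut. Qed.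

Lemma cset_L_imp (y : pt) a b : L (Imp a b) -> kf b -> cset y a -> cset y b.
Proof.
move=> ab kb ya; apply: (@cset_bigAnd_imp y [:: a]) => [_ [<-|[]]//|//|].
by apply: (L_tconseq ab) => v /=; peval_cases.
Qed.

Lemma cset_Imp (y : pt) a b : kf a -> kf b -> cset y (Imp a b) <-> (cset y a -> cset y b).
Proof.
move=> ka kb; split=> [yab ya|yayb].
  apply: (@cset_bigAnd_imp y [:: Imp a b; a]) => [_ [<-|[<-|[]]]//|//|].
  by apply: L_taut => v /=; peval_cases.
have kab : kf (Imp a b) by apply/kf_Imp.
case: (classic (cset y a)) => [/yayb|/(cset_Neg_of_not ka)] yx; apply: cset_L_imp yx => //;
  by apply: L_taut => v /=; peval_cases.
Qed.

Lemma cset_Neg (y : pt) a : kf a -> cset y (Neg a) <-> ~ cset y a.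
Proof.
move=> ka; rewrite cset_Imp //; last exact: kf_Bot.
by split=> [nya /nya /cset_Bot|nya /nya].
Qed.

Lemma cset_Top (y : pt) : cset y (Top n).
Proof. by apply/cset_Neg; [exact: kf_Bot | exact: cset_Bot]. Qed.

Lemma cset_Or (y : pt) a b : kf a -> kf b -> cset y (Or a b) <-> cset y a \/ cset y b.
Proof.
move=> ka kb; rewrite cset_Imp ?kf_Neg // cset_Neg //.
split=> [ab|[ya /(_ ya)[]|yb _]//].
by case: (classic (cset y a)) => [|/ab]; [left|right].
Qed.

Lemma cset_And (y : pt) a b : kf a -> kf b -> cset y (And a b) <-> cset y a /\ cset y b.
Proof.
move=> ka kb; have kanb : kf (Imp a (Neg b)) by apply/kf_Imp; split=> //; apply/kf_Neg.
rewrite cset_Neg // cset_Imp //; last exact/kf_Neg.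
rewrite cset_Neg //; split=> [nab|[ya yb] /(_ ya)/(_ yb)//].
by split; apply: NNPP => H; apply: nab => ya; [case: (H ya) | exact: H].
Qed.

Lemma cset_bigOr (y : pt) l :
  (forall e, List.In e l -> kf e) -> cset y (bigOr l) <-> exists2 e, List.In e l & cset y e.
Proof.
elim: l => [|a l IH] kl /=; first by split=> [/cset_Bot|[]].
have kl' e : List.In e l -> kf e by move=> el; apply: kl; right.
rewrite cset_Or ?IH //; last exact: kf_bigOr; last by apply: kl; left.
split=> [[ya|[e el ye]]|[e [<-|el] ye]]; last by right; exists e.
- by exists a => //; left.
- by exists e => //; right.
- by left.
Qed.

Lemma lindenbaum (D : form n -> Prop) :
  (forall a, D a -> kf a) -> Lconsistent L D -> exists y : pt, forall a, D a -> cset y a.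
Proof.
move=> Dk Dcons.
pose P S := [/\ forall a, S a -> kf a, Lconsistent L S & forall a, D a -> S a].
pose R (s t : {S | P S}) := forall a, sval s a -> sval t a.
have chains A : classical_sets.total_on A R -> exists t, forall s, A s -> R s t.
  move=> Atot; have PU : P (fun a => D a \/ exists2 s, A s & sval s a).
    split; last by move=> a; left.
    - by move=> a [/Dk//|[s _]]; case: (svalP s) => sk _ _ /sk.
    - apply: (@Lconsistent_chain_union _ D (@sval _ _) A R Atot) => // [s _ a|s _].
        by case: (svalP s) => _ _; apply.
      by case: (svalP s).
  by exists (exist _ _ PU) => s As a sa; right; exists s.
have [[S [Sk Scons DS]] Smax] := ZL_preorder_Prop (exist _ D (And3 Dk Dcons (fun a Da => Da)))
  (fun _ _ => id) (fun r s t rs st a ra => st a (rs a ra)) chains.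
have Smc : maximal_consistent L k S.
  split=> // D' D'k D'cons SD'.
  exact: (Smax (exist _ D' (And3 D'k D'cons (fun a Da => SD' a (DS a Da)))) SD').
by exists (CPoint Smc).
Qed.

Lemma canR_existence (y : pt) i a : cset y (Dia i a) -> exists2 z, canR i y z & cset z a.
Proof.
move=> yDa; have ka : kf a by apply/(kf_Dia i)/(cset_kf yDa).
have kBna : kf (Box i (Neg a)) by apply/kf_Box/kf_Neg.
have [z Gz] : exists z : pt, forall e, (kf e /\ cset y (Box i e)) \/ e = a -> cset z e.
  apply: lindenbaum => [e [[]//|->//]|].
  apply: NNPP => /not_Lconsistent_add [l lG lna].
  have yBna : cset y (Box i (Neg a)).
    apply: (cset_bigAnd_imp _ kBna (L_box_bigAnd_imp i lna)).
    by move=> _ /In_map [e /lG [_ yBe] ->].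
  by move: yDa; rewrite /Dia cset_Neg.
exists z; last by apply: Gz; right.
move=> c kc zc; apply: NNPP => nyDc.
have kBnc : kf (Box i (Neg c)) by apply/kf_Box/kf_Neg.
have yBnc : cset y (Box i (Neg c)) by apply: NNPP => nyBnc; apply/nyDc/cset_Neg.
by have /cset_Neg := Gz (Neg c) (or_introl (conj (proj2 (kf_Neg c) kc) yBnc)); apply.
Qed.

Lemma cset_Dia (y : pt) i a : cset y (Dia i a) <-> exists2 z, canR i y z & cset z a.
Proof.
split=> [/canR_existence//|[z yz za]].
exact: yz _ (cset_kf za) za.
Qed.

Local Notation reach := (clos_refl_trans pt (@canRU n L k)).

Fixpoint reachn (j : nat) (y z : pt) : Prop :=
  if j is j'.+1 then exists2 w, reachn j' y w & canRU w z else y = z.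

Lemma reach_iff_reachn (y z : pt) : reach y z <-> exists j, reachn j y z.
Proof.
split=> [/clos_rt_rtn1_iff|[j]].
  by elim=> [|w z' wz' _ [j yw]]; [exists 0 | exists j.+1; exists w].
elim: j z => [|j IH] z /=; first by move=> ->; apply: rt_refl.
by move=> [w /IH yw wz]; apply: rt_trans yw (rt_step _ _ _ _ wz).
Qed.

Lemma cset_diaU (y : pt) a : kf a -> cset y (diaU a) <-> exists2 z, canRU y z & cset z a.
Proof.
move=> ka; rewrite cset_bigOr => [|_ /In_map [i _ ->]]; last exact/kf_Dia.
split=> [[_ /In_map [i _ ->] /cset_Dia [z yz za]]|[z [i yz] za]].
  by exists z => //; exists i.
exists (Dia i a); first by apply/In_map; exists i => //; apply/In_mem; rewrite mem_enum.
by apply/cset_Dia; exists z.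
Qed.

Lemma cset_DiaPow j (y : pt) a :
  kf a -> cset y (DiaPow j a) <-> exists2 z, reachn j y z & cset z a.
Proof.
elim: j a => [|j IH] a ka /=; first by split=> [ya|[z -> //]]; exists y.
rewrite IH; last exact: kf_diaU.
split=> [[w yw /(cset_diaU _ ka) [z wz za]]|[z [w yw wz] za]].
  by exists z => //; exists w.
by exists w => //; apply/cset_diaU => //; exists z.
Qed.

Lemma cset_mono_of_sem (op : form n -> form n) (R : pt -> pt -> Prop) (y : pt) :
  (forall c, kf c -> cset y (op c) <-> exists2 z, R y z & cset z c) ->
  forall c c', kf c -> kf c' -> (forall u : pt, cset u c -> cset u c') ->
  cset y (op c) -> cset y (op c').
Proof.
move=> sem c c' kc kc' cc' /(sem _ kc) [z yz zc].
by apply/sem => //; exists z => //; apply: cc'.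
Qed.

Lemma cset_bigOr_uniform (T : Type) (s : seq T) (op : T -> form n -> form n) (y z : pt) :
  (forall t c, kf c -> kf (op t c)) ->
  (forall t c c', kf c -> kf c' -> (forall u : pt, cset u c -> cset u c') ->
     cset y (op t c) -> cset y (op t c')) ->
  (forall c, cset z c -> cset y (bigOr [seq op t c | t <- s])) ->
  exists2 t, List.In t s & forall c, cset z c -> cset y (op t c).
Proof.
move=> kop op_mono zy; apply: NNPP => nounif.
have witness t : List.In t s -> exists2 c, cset z c & ~ cset y (op t c).
  move=> ts; apply: NNPP => H; apply: nounif; exists t => // c zc.
  by apply: NNPP => nyc; apply: H; exists c.
have [c zc nyc] : exists2 c, cset z c & forall t, List.In t s -> ~ cset y (op t c).
  elim: {zy nounif}s witness => [|t s IH] witness; first by exists (Top n) => //; apply: cset_Top.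
  have [c zc nyc] := IH (fun t' ts => witness t' (or_intror ts)).
  have [c' zc' nyc'] := witness t (or_introl erefl).
  have [kc kc'] := (cset_kf zc, cset_kf zc').
  exists (And c c'); first exact/cset_And.
  have kcc : kf (And c c') by apply/kf_And.
  move=> t' [<-|ts] /op_mono yop; [apply/nyc'/yop | apply/(nyc t' ts)/yop] => // u /cset_And.
    by case.
  by case.
have kl : forall e, List.In e [seq op t c | t <- s] -> kf e.
  by move=> _ /In_map [t _ ->]; apply/kop/(cset_kf zc).
by have [_ /In_map [t ts ->] /(nyc t ts)] := (cset_bigOr y kl).1 (zy c zc).
Qed.

Lemma cset_sub_eq (y z : pt) : (forall a, cset z a -> cset y a) -> y = z.
Proof.
move=> zy; have yz : forall a, cset y a -> cset z a.
  by case: (cset_mc z) => _ _; apply; [apply: cset_kf | apply: cset_consistent |].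
case: y z zy yz => [Sy my] [Sz mz] /= zy yz.
have eS : Sy = Sz by apply: funext => a; apply: propext; split; [apply: yz | apply: zy].
by subst; congr CPoint; apply: Prop_irrelevance.
Qed.

Lemma reachn_step j (y z : pt) : (forall c, cset z c -> cset y (DiaPow j.+1 c)) ->
  exists2 w, (forall d, cset w d -> cset y (DiaPow j d)) & canRU w z.
Proof.
move=> zy.
pose D e := kf e /\ exists2 c, cset z c &
  forall v, reachn j y v -> cset v (diaU c) -> cset v e.
have Dfin l : (forall e, List.In e l -> D e) -> exists2 c, cset z c &
    forall v, reachn j y v -> cset v (diaU c) -> forall e, List.In e l -> cset v e.
  elim: l => [|e l IH] lD; first by exists (Top n) => //; apply: cset_Top.
  have [c zc lc] := IH (fun e' el => lD e' (or_intror el)).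
  have [_ [c' zc' ec']] := lD e (or_introl erefl).
  have [kc kc'] := (cset_kf zc, cset_kf zc').
  exists (And c c'); first exact/cset_And.
  move=> v yv vcc; have kcc : kf (And c c') by apply/kf_And.
  have diaU_mono := cset_mono_of_sem (fun c => cset_diaU v (a := c)).
  move=> e'' [<-|el]; [apply: ec' | apply: lc] => //; apply: diaU_mono vcc => // u /cset_And.
    by case.
  by case.
have [w Dw] : exists w : pt, forall e, D e -> cset w e.
  apply: lindenbaum => [e []//|l lD].
  have [c zc lc] := Dfin l lD.
  have [v yv vc] := (cset_DiaPow j y (kf_diaU (cset_kf zc))).1 (zy c zc).
  exact: cset_consistent (lc v yv vc).
exists w => [d wd|].
  apply: NNPP => nyd; have kd := cset_kf wd.
  suff /(cset_Neg _ kd) : cset w (Neg d) by apply.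
  apply: Dw; split; first exact/kf_Neg.
  exists (Top n); first exact: cset_Top.
  by move=> v yv _; apply/cset_Neg => // vd; apply: nyd; apply/cset_DiaPow => //; exists v.
have [|||i _ wz] := @cset_bigOr_uniform _ (enum 'I_n) (@Dia n) w z.
- by move=> i c kc; apply/kf_Dia.
- by move=> i; apply: cset_mono_of_sem (fun c _ => cset_Dia w i c).
- move=> c zc; apply: Dw; split; first exact/kf_diaU/(cset_kf zc).
  by exists c.
by exists i => c _; apply: wz.
Qed.

Lemma reachn_of_DiaPow j (y z : pt) :
  (forall c, cset z c -> cset y (DiaPow j c)) -> reachn j y z.
Proof.
elim: j z => [|j IH] z /= zy; first exact: cset_sub_eq.
by have [w wy wz] := reachn_step zy; exists w => //; apply: IH.
Qed.

Section Pretransitive.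
Variable m : nat.
Hypothesis pretrans : L (Imp (DiaPow m.+1 (@Var n 0)) (DiaLe m (@Var n 0))).

Lemma L_pretrans d : L (Imp (DiaPow m.+1 d) (DiaLe m d)).
Proof.
have subst_Imp s a b : subst s (Imp a b) = Imp (subst s a) (subst s b) by [].
by have := L_subst (fun _ => d) pretrans; rewrite subst_Imp subst_DiaPow subst_DiaLe.
Qed.

Lemma cset_DiaLe (y : pt) c :
  kf c -> cset y (DiaLe m c) <-> exists2 j, j <= m & cset y (DiaPow j c).
Proof.
move=> kc; rewrite cset_bigOr => [|_ /In_map [j _ ->]]; last exact: kf_DiaPow.
have jm j : List.In j (iota 0 m.+1) <-> j <= m by rewrite In_mem mem_iota.
split=> [[_ /In_map [j /jm jlem ->] yj]|[j /jm jlem yj]]; first by exists j.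
by exists (DiaPow j c) => //; apply/In_map; exists j.
Qed.

Lemma cset_DiaLe_of_DiaPow j (y : pt) c : kf c -> cset y (DiaPow j c) -> cset y (DiaLe m c).
Proof.
move=> kc; elim/ltn_ind: j => j IH yj.
case: (leqP j m) => [jm|mj]; first by apply/cset_DiaLe => //; exists j.
have kd := kf_DiaPow (j - m.+1) kc.
have yLe : cset y (DiaLe m (DiaPow (j - m.+1) c)).
  by apply: cset_L_imp (L_pretrans _) (kf_DiaLe m kd) _; rewrite -DiaPow_add subnKC.
have [i im yi] := (cset_DiaLe y kd).1 yLe.
by apply: (IH (i + (j - m.+1))); [lia | rewrite DiaPow_add].
Qed.

Lemma reach_iff_DiaLe (y z : pt) : reach y z <-> forall c, cset z c -> cset y (DiaLe m c).
Proof.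
split=> [/reach_iff_reachn [j yz] c zc|zy].
  have kc := cset_kf zc.
  by apply: (cset_DiaLe_of_DiaPow (j := j)) => //; apply/cset_DiaPow => //; exists z.
have [|||j _ yz] := @cset_bigOr_uniform _ (iota 0 m.+1) (@DiaPow n) y z.
- by move=> j c; apply: kf_DiaPow.
- by move=> j; apply: cset_mono_of_sem (fun c kc => cset_DiaPow j y kc).
- exact: zy.
by apply/reach_iff_reachn; exists j; apply: reachn_of_DiaPow.
Qed.

Definition cone_theory (y : pt) a := kf a /\ forall z, reach y z -> cset z a.

Lemma Lconsistent_cone_theory (y : pt) : Lconsistent L (cone_theory y).
Proof. by apply: (Lconsistent_of_cset (y := y)) => a [_]; apply; apply: rt_refl. Qed.

Lemma reach_of_cone_theory (y z : pt) : (forall a, cone_theory y a -> cset z a) -> reach y z.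
Proof.
move=> yz; apply/reach_iff_DiaLe => c zc; apply: NNPP => nyc; have kc := cset_kf zc.
suff /(cset_Neg _ kc) : cset z (Neg c) by apply.
apply: yz; split; first exact/kf_Neg.
by move=> w yw; apply/cset_Neg => // wc; apply: nyc; apply: (reach_iff_DiaLe y w).1 yw c wc.
Qed.

Lemma exists_premaximal_reach (x : pt) :
  exists2 y, reach x y & forall z, reach y z -> reach z y.
Proof.
pose R (s t : {y | reach x y}) := reach (sval s) (sval t).
have chains A : classical_sets.total_on A R -> exists t, forall s, A s -> R s t.
  move=> Atot.
  have [z Uz] : exists z : pt,
      forall a, cone_theory x a \/ (exists2 s, A s & cone_theory (sval s) a) -> cset z a.
    apply: lindenbaum => [a [[]|[s _ []]]//|].
    apply: (@Lconsistent_chain_union _ _ (fun s => cone_theory (sval s)) A R Atot).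
    - by move=> s t st a [ka sa]; split=> // w tw; apply: sa; apply: rt_trans st tw.
    - by move=> s _ a [ka xa]; split=> // w sw; apply: xa; apply: rt_trans (svalP s) sw.
    - exact: Lconsistent_cone_theory.
    - by move=> s _; apply: Lconsistent_cone_theory.
  have xz : reach x z by apply: reach_of_cone_theory => a xa; apply: Uz; left.
  exists (exist _ z xz) => s As; apply: reach_of_cone_theory => a sa.
  by apply: Uz; right; exists s.
have [[y xy] ymax] := ZL_preorder_Prop (exist _ x (rt_refl _ _ x)) (R := R)
  (fun _ => rt_refl _ _ _) (fun r s t => rt_trans _ _ _ _ _) chains.
by exists y => // z yz; apply: (ymax (exist _ z (rt_trans _ _ _ _ _ xy yz))).
Qed.

End Pretransitive.
End CanonicalFrame.
End NormalLogic.

Theorem proposition4p2 (n : nat) (L : form n -> Prop) (k : option nat) :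
  normal_logic L -> consistent_logic L -> pretransitive L ->
  heavy (@canRU n L k) 1.
Proof.
move=> HL _ [m pretrans] x _.
have [y xy ymax] := exists_premaximal_reach HL pretrans x.
by exists y; split; last exact: depth_eq_1_of_premaximal.
Qed.
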